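(* Let $X_1,X_2,\dots$ be i.i.d. $\mathbb{Z}$-valued random variables and $S_n=\sum_{j=1}^nX_j$. For every $N\in\mathbb{N}\setminus\{1\}$, $$\frac{1}{1+\sum_{i=1}^{N-1}P\{S_i\in[i]_N\}}\le\mathbb{P}^{(N)}_{\mathcal{R}}\Big(\bigcup_{n=1}^N\{\mathcal{R}^{(N)}_n=(n\bmod N)\}\Big)\le\frac{2}{1+\sum_{i=1}^{N-1}P\{S_i\in[i]_N\}}.$$
   Context: $X_j$ live on $(\Omega,\mathcal{F},P)$. $[y]_N=\{y+kN:k\in\mathbb{Z}\}$. For $N\in\mathbb{N}$, $X^{(N)}_0$ is uniform on $\{0,\dots,N-1\}$ under $(\Omega_N,\mathcal{F}_N,\mu_N)$; $(b\bmod N)$ is the remainder of $b\in\mathbb{Z}$ divided by $N$; $\mathcal{R}^{(N)}_n=(X^{(N)}_0+S_n\bmod N)$; $\mathbb{P}^{(N)}_{\mathcal{R}}=\mu_N\times P$. *)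

From HB Require Import structures.
From mathcomp Require Import all_boot all_order all_algebra.
From mathcomp Require Import all_classical all_reals all_analysis.
Set Implicit Arguments. Unset Strict Implicit. Unset Printing Implicit Defensive.
Import Order.TTheory GRing.Theory Num.Theory.
Local Open Scope classical_set_scope.
Local Open Scope ring_scope.

(* X : nat -> T -> int, where X j stands for the paper's X_{j+1}. *)

Definition int_rvs d (T : measurableType d) (X : nat -> T -> int) : Prop :=
  forall j (k : int), measurable [set w | X j w = k].

Definition mutually_independent d (T : measurableType d) (R : realType)
  (P : probability T R) (X : nat -> T -> int) : Prop :=
  forall (I : seq nat) (k : nat -> int), uniq I ->
    P (\bigcap_(i in [set` I]) [set w | X i w = k i]) =
    (\prod_(i <- I) P [set w | X i w = k i])%E.

Definition identically_distributed d (T : measurableType d) (R : realType)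
  (P : probability T R) (X : nat -> T -> int) : Prop :=
  forall j (k : int), P [set w | X j w = k] = P [set w | X 0%N w = k].

Definition partial_sum d (T : measurableType d) (X : nat -> T -> int)
  (n : nat) (w : T) : int := \sum_(j < n) X j w.

Definition p_class d (T : measurableType d) (R : realType)
  (P : probability T R) (X : nat -> T -> int) (N i : nat) : R :=
  fine (P [set w | (N%:Z %| partial_sum X i w - i%:Z)%Z]).

(* The event  U_{n=1}^N {R_n = (n mod N)}  sliced at X_0^{(N)} = x,
   with R_n = (x + S_n mod N). *)
Definition hit_event d (T : measurableType d) (X : nat -> T -> int)
  (N x : nat) : set T :=
  [set w | exists n : nat, (1 <= n <= N)%N /\
     ((x%:Z + partial_sum X n w) %% N%:Z)%Z = ((n %% N)%N)%:Z].

(* P^{(N)}_R = mu_N x P of that event, mu_N uniform on {0,...,N-1}: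
   (mu_N x P)(A) = sum_x mu_N{x} P(A_x) = (1/N) sum_{x<N} P(A_x). *)
Definition PR_hit d (T : measurableType d) (R : realType)
  (P : probability T R) (X : nat -> T -> int) (N : nat) : R :=
  (N%:R)^-1 * \sum_(x < N) fine (P (hit_event X N x)).

(* Only the residues of the X_j modulo N matter, and these are i.i.d. on
   {0, ..., N-1}, so every probability below is a finite expectation over
   residue sequences.  Write p_j = P{S_j in [j]_N}, so that the denominator is
   D = p_0 + ... + p_(N-1), and for a start x let G_x(k) be the probability
   that the first n >= 1 with R_n = (n mod N) is k.  For every n exactly one
   start x in {0, ..., N-1} gives R_n = (n mod N), so summing these events over
   x and over 1 <= n <= B gives B.  Restarting the walk at its first hit k shows
   P(first hit at k, R_n = (n mod N)) = G_x(k) p_(n-k).  With B = N every hit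
   has a first hit k <= N, and sum_(j <= N-k) p_j <= D gives
   N <= D * sum_x sum_(k <= N) G_x(k) = D * N * P_R(...).  With B = 2N,
   discarding first hits after time N, sum_(j <= 2N-k) p_j >= D gives
   D * N * P_R(...) <= 2N. *)

From HB Require Import structures.
From mathcomp Require Import all_boot all_order all_algebra.
From mathcomp Require Import all_classical all_reals all_analysis.
From mathcomp Require Import zify ring.
Import Order.TTheory GRing.Theory Num.Theory.
Set Implicit Arguments. Unset Strict Implicit. Unset Printing Implicit Defensive.
Local Open Scope ring_scope.

Section SeqExpectation.
Variables (R : numDomainType) (N : nat) (q : nat -> R).

Fixpoint Eseq (n : nat) (g : seq nat -> R) : R :=
  if n is n'.+1 then \sum_(r < N) q r * Eseq n' (fun s => g (nat_of_ord r :: s))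
  else g [::].

Lemma eq_Eseq n f g : f =1 g -> Eseq n f = Eseq n g.
Proof.
elim: n f g => [|n IH] f g fg /=; first exact: fg.
by apply: eq_bigr => r _; rewrite (IH _ (fun s => g (nat_of_ord r :: s))).
Qed.

Lemma EseqD n f g : Eseq n (fun s => f s + g s) = Eseq n f + Eseq n g.
Proof.
elim: n f g => [|n IH] f g //=.
by rewrite -big_split; apply: eq_bigr => r _ /=; rewrite IH mulrDr.
Qed.

Lemma EseqZ n c f : Eseq n (fun s => c * f s) = c * Eseq n f.
Proof.
elim: n f => [|n IH] f //=.
by rewrite mulr_sumr; apply: eq_bigr => r _ /=; rewrite IH mulrCA.
Qed.

Lemma Eseq_cat k j a b :
  Eseq (k + j) (fun s => a (take k s) * b (drop k s)) = Eseq k a * Eseq j b.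
Proof.
elim: k a => [|k IH] a /=.
  by rewrite (@eq_Eseq _ _ (fun s => a [::] * b s)) ?EseqZ // => s; rewrite take0 drop0.
by rewrite mulr_suml; apply: eq_bigr => r _; rewrite -mulrA -IH.
Qed.

Hypothesis q_sum : \sum_(r < N) q r = 1.

Lemma Eseq_cst n c : Eseq n (fun _ => c) = c.
Proof. by elim: n => [|n IH] //=; rewrite -mulr_suml q_sum mul1r. Qed.

Lemma Eseq_sum n (I : Type) (r : seq I) (P : pred I) (F : I -> seq nat -> R) :
  Eseq n (fun s => \sum_(i <- r | P i) F i s) = \sum_(i <- r | P i) Eseq n (F i).
Proof.
elim: r => [|i r IH].
  by rewrite big_nil -[RHS](Eseq_cst n 0); apply: eq_Eseq => s; rewrite big_nil.
rewrite big_cons -IH; case Pi: (P i).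
  by rewrite -EseqD; apply: eq_Eseq => s; rewrite big_cons Pi.
by apply: eq_Eseq => s; rewrite big_cons Pi.
Qed.

Lemma Eseq_take n k a : (k <= n)%N -> Eseq n (fun s => a (take k s)) = Eseq k a.
Proof.
move=> kn; rewrite -(subnKC kn).
have := Eseq_cat k (n - k) a (fun _ => 1); rewrite Eseq_cst mulr1 => <-.
by apply: eq_Eseq => s; rewrite mulr1.
Qed.

Hypothesis q_ge0 : forall r, 0 <= q r.

Lemma ler_Eseq n f g : (forall s, f s <= g s) -> Eseq n f <= Eseq n g.
Proof.
elim: n f g => [|n IH] f g fg /=; first exact: fg.
by apply: ler_sum => r _; apply/ler_wpM2l/IH.
Qed.

Lemma Eseq_ge0 n f : (forall s, 0 <= f s) -> 0 <= Eseq n f.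
Proof.
elim: n f => [|n IH] f f0 /=; first exact: f0.
by apply: sumr_ge0 => r _; apply/mulr_ge0/IH.
Qed.

End SeqExpectation.

Lemma sum_nat_has (R : pzSemiRingType) (I : eqType) (r : seq I) (f : pred I) :
  uniq r -> {in r &, forall a b, f a -> f b -> a = b} ->
  \sum_(i <- r) (f i)%:R = (has f r)%:R :> R.
Proof.
elim: r => [|a r IH] /=; first by rewrite big_nil.
move=> /andP[ar ur] f_inj; rewrite big_cons IH //; last first.
  by move=> u v ur' vr'; apply: f_inj; rewrite inE ?ur' ?vr' orbT.
case fa: (f a) => /=; last by rewrite add0r.
case/boolP: (has f r) => [/hasP[b br fb]|_]; last by rewrite addr0.
by move: ar; rewrite (f_inj a b) ?inE ?eqxx ?br ?orbT.
Qed.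

Section Hitting.
Variable N : nat.

(* With [s] the residues of X_1, X_2, ..., [hits x n s] is the paper's event
   R_n = (n mod N) on the slice X_0^(N) = x. *)
Definition hits (x n : nat) (s : seq nat) : bool :=
  (N%:Z %| x%:Z + (sumn (take n s))%:Z - n%:Z)%Z.

Definition first_hit (x k : nat) (s : seq nat) : bool :=
  hits x k s && all (fun j => ~~ hits x j s) (iota 1 k.-1).

Definition hits_by (x : nat) (s : seq nat) : bool :=
  has (fun n => hits x n s) (iota 1 N).

Lemma hits_take x j k s : (j <= k)%N -> hits x j (take k s) = hits x j s.
Proof. by move=> jk; rewrite /hits take_takel. Qed.

Lemma first_hit_take x k s : first_hit x k (take k s) = first_hit x k s.
Proof.
rewrite /first_hit hits_take //; congr andb; apply: eq_in_all => j.
by rewrite mem_iota => /andP[_ jk]; rewrite hits_take //; lia.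
Qed.

Lemma hits_restart x k n s : hits x k s -> (k <= n)%N ->
  hits x n s = hits 0 (n - k) (drop k s).
Proof.
rewrite /hits => hk kn.
have -> : take n s = take k s ++ take (n - k) (drop k s) by rewrite -takeD subnKC.
rewrite sumn_cat; set a := sumn (take k s); set b := sumn (take (n - k) _).
have -> : x%:Z + (a + b)%N%:Z - n%:Z =
    (x%:Z + a%:Z - k%:Z) + (0%N%:Z + b%:Z - (n - k)%N%:Z).
  by rewrite PoszD -(subzn kn); ring.
by rewrite (rpredDl _ (hk : _ \in dvdz N)).
Qed.

Lemma first_hit_hits x k s : first_hit x k s -> hits x k s.
Proof. by case/andP. Qed.

Lemma first_hit_inj x a b s : (1 <= a)%N -> (1 <= b)%N ->
  first_hit x a s -> first_hit x b s -> a = b.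
Proof.
wlog ab : a b / (a <= b)%N.
  by move=> W a1 b1 Fa Fb; case: (leqP a b) => [|/ltnW] ab; [|apply/esym]; apply: W.
move=> a1 b1 /first_hit_hits ha /andP[_ /allP nhb].
case: (ltngtP a b) ab => // ab _.
by have /nhb/negP[] : a \in iota 1 b.-1 by rewrite mem_iota; lia.
Qed.

Lemma exists_first_hit x n s : (1 <= n)%N -> hits x n s ->
  exists2 k, (1 <= k <= n)%N & first_hit x k s.
Proof.
move=> n1 hn.
have exP : exists j, (1 <= j)%N && hits x j s by exists n; rewrite n1.
case: (ex_minnP exP) => k /andP[k1 hk] kmin.
exists k; first by rewrite k1 kmin ?n1.
rewrite /first_hit hk; apply/allP => j; rewrite mem_iota => /andP[j1 jk].
by apply/negP => hj; have := kmin j; rewrite j1 hj => /(_ isT); lia.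
Qed.

Lemma hits_by_first_hit (R : pzSemiRingType) x s :
  (hits_by x s)%:R = \sum_(1 <= k < N.+1) (first_hit x k s)%:R :> R.
Proof.
rewrite sum_nat_has ?iota_uniq //; last first.
  by move=> a b; rewrite !mem_index_iota => /andP[a1 _] /andP[b1 _]; exact: first_hit_inj.
suff -> : hits_by x s = has (first_hit x ^~ s) (index_iota 1 N.+1) by [].
apply/hasP/hasP => [[n] | [k]].
  rewrite mem_iota => /andP[n1 nN] /(exists_first_hit n1) [k kn Fk].
  by exists k; rewrite ?mem_index_iota; lia.
rewrite mem_index_iota => kN /first_hit_hits hk.
by exists k; rewrite ?mem_iota; lia.
Qed.

Hypothesis N_gt0 : (0 < N)%N.

Lemma sum_hits_start (R : pzSemiRingType) n s :
  \sum_(x < N) (hits x n s)%:R = 1 :> R.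
Proof.
set c := (sumn (take n s))%:Z - n%:Z.
have hitsE x : (x < N)%N -> hits x n s = (x%:Z == (- c) %% N%:Z)%Z.
  move=> xN; rewrite /hits -addrA -/c -[c in _ + c](opprK c).
  by rewrite -eqz_mod_dvd modz_small //; lia.
have c0 : 0 <= ((- c) %% N%:Z)%Z by rewrite modz_ge0 //; lia.
have cN : ((- c) %% N%:Z)%Z < N%:Z by rewrite ltz_pmod //; lia.
rewrite -(big_mkord xpredT (fun x => (hits x n s)%:R)) sum_nat_has ?iota_uniq //.
  have -> // : has (fun x => hits x n s) (index_iota 0 N).
  by apply/hasP; exists (absz ((- c) %% N%:Z)%Z); rewrite ?mem_index_iota ?hitsE; lia.
by move=> a b; rewrite !mem_index_iota => aN bN; rewrite !hitsE //; lia.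
Qed.

End Hitting.

Section Renewal.
Variables (R : numDomainType) (N M : nat) (q : nat -> R).
Hypotheses (q_ge0 : forall r, 0 <= q r) (q_sum : \sum_(r < N) q r = 1).
Hypotheses (N_gt0 : (0 < N)%N) (NN_le_M : (N + N <= M)%N).

Local Notation E := (Eseq N q).
Local Notation hits := (hits N).
Local Notation first_hit := (first_hit N).

Definition return_prob j := E j (fun s => (hits 0 j s)%:R).

Definition first_hit_prob x k := E M (fun s => (first_hit x k s)%:R).

Definition hit_prob := \sum_(x < N) E M (fun s => (hits_by N x s)%:R).

Definition renewal_weight := 1 + \sum_(1 <= i < N) return_prob i.

Lemma return_prob_ge0 j : 0 <= return_prob j.
Proof. exact: Eseq_ge0. Qed.

Lemma renewal_weightE : renewal_weight = \sum_(0 <= j < N) return_prob j.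
Proof.
by rewrite /renewal_weight (big_ltn N_gt0) /return_prob /= /hits subr0 addr0 dvdz0.
Qed.

Lemma renewal_weight_gt0 : 0 < renewal_weight.
Proof.
apply: lt_le_trans ltr01 _; rewrite lerDl sumr_ge0 // => i _.
exact: return_prob_ge0.
Qed.

Lemma Eseq_first_hit_hits x k n : (1 <= k)%N -> (k <= n)%N -> (n <= M)%N ->
  E M (fun s => (first_hit x k s && hits x n s)%:R) =
  first_hit_prob x k * return_prob (n - k).
Proof.
move=> k1 kn nM; have kM : (k <= M)%N by apply: leq_trans nM.
have split_at_k s : (first_hit x k s && hits x n s)%:R =
    (first_hit x k (take k s))%:R *
    (hits 0 (n - k) (take (n - k) (drop k s)))%:R :> R.
  rewrite first_hit_take hits_take //.
  case Fk: (first_hit x k s); last by rewrite mul0r.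
  by rewrite (hits_restart (first_hit_hits Fk) kn) mul1r.
rewrite (eq_Eseq N q M split_at_k) -{1}(subnKC kM).
rewrite (Eseq_cat N q k (M - k) (fun t => (first_hit x k t)%:R)
  (fun t => (hits 0 (n - k) (take (n - k) t))%:R)).
congr (_ * _).
  rewrite /first_hit_prob -(Eseq_take q_sum (fun t => (first_hit x k t)%:R) kM).
  by apply: eq_Eseq => s; rewrite first_hit_take.
by rewrite (Eseq_take q_sum (fun t => (hits 0 (n - k) t)%:R)) // leq_sub2r.
Qed.

Definition hits_after_first_hit x n s : R :=
  \sum_(1 <= k < N.+1) ((k <= n)%N && first_hit x k s && hits x n s)%:R.

Lemma hits_after_first_hitE x n s : hits_after_first_hit x n s =
  (has (fun k => (k <= n)%N && first_hit x k s && hits x n s) (index_iota 1 N.+1))%:R.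
Proof.
rewrite /hits_after_first_hit sum_nat_has ?iota_uniq //.
move=> a b; rewrite !mem_index_iota => /andP[a1 _] /andP[b1 _].
by move=> /andP[/andP[_ Fa] _] /andP[/andP[_ Fb] _]; apply: first_hit_inj Fa Fb.
Qed.

Lemma hits_after_first_hit_le x n s : hits_after_first_hit x n s <= (hits x n s)%:R.
Proof.
rewrite hits_after_first_hitE ler_nat.
by case: hasP => // -[k _ /andP[_ ->]].
Qed.

Lemma hits_after_first_hit_eq x n s : (1 <= n <= N)%N ->
  hits_after_first_hit x n s = (hits x n s)%:R.
Proof.
move=> /andP[n1 nN]; rewrite hits_after_first_hitE; congr (nat_of_bool _)%:R.
apply/hasP/idP => [[k _ /andP[]] // | hn].
have [k /andP[k1 kn] Fk] := exists_first_hit n1 hn.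
by exists k; [rewrite mem_index_iota; lia | rewrite kn Fk hn].
Qed.

Definition delayed_return_prob k n := if (k <= n)%N then return_prob (n - k) else 0.

Lemma Eseq_hits_after_first_hit x n : (n <= M)%N ->
  E M (hits_after_first_hit x n) =
  \sum_(1 <= k < N.+1) first_hit_prob x k * delayed_return_prob k n.
Proof.
move=> nM; rewrite Eseq_sum // big_nat_cond [RHS]big_nat_cond.
apply: eq_bigr => k /andP[/andP[k1 _] _]; rewrite /delayed_return_prob.
case: ifP => kn; first exact: Eseq_first_hit_hits.
by rewrite mulr0 -(Eseq_cst q_sum M 0); apply: eq_Eseq => s; rewrite ?kn.
Qed.

Lemma sum_delayed_return_prob k B : (1 <= k <= B.+1)%N ->
  \sum_(1 <= n < B.+1) delayed_return_prob k n = \sum_(0 <= j < B.+1 - k) return_prob j.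
Proof.
move=> /andP[k1 kB]; rewrite (@big_cat_nat _ _ _ k 1 B.+1) //= big1_seq; last first.
  by move=> n /andP[_]; rewrite mem_index_iota /delayed_return_prob => /andP[_ /ltn_geF ->].
rewrite add0r -{1}(add0n k) big_addn; apply: eq_bigr => j _.
by rewrite /delayed_return_prob leq_addl addnK.
Qed.

Definition renewal_sum B :=
  \sum_(1 <= n < B.+1) \sum_(x < N) E M (hits_after_first_hit x n).

Lemma renewal_sumE B : (N <= B <= M)%N -> renewal_sum B =
  \sum_(x < N) \sum_(1 <= k < N.+1)
     first_hit_prob x k * \sum_(0 <= j < B.+1 - k) return_prob j.
Proof.
move=> /andP[NB BM]; rewrite /renewal_sum big_nat_cond.
rewrite (eq_bigr (fun n => \sum_(x < N) \sum_(1 <= k < N.+1)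
    first_hit_prob x k * delayed_return_prob k n)); last first.
  move=> n /andP[/andP[_ nB] _]; apply: eq_bigr => x _.
  by apply: Eseq_hits_after_first_hit; lia.
rewrite -big_nat_cond exchange_big; apply: eq_bigr => x _.
rewrite exchange_big big_nat_cond [RHS]big_nat_cond; apply: eq_bigr => k /andP[kN _].
by rewrite -mulr_sumr sum_delayed_return_prob //; lia.
Qed.

Lemma hit_probE : hit_prob = \sum_(x < N) \sum_(1 <= k < N.+1) first_hit_prob x k.
Proof.
apply: eq_bigr => x _.
by rewrite (eq_Eseq N q M (fun s => hits_by_first_hit N R x s)) Eseq_sum.
Qed.

Lemma sum_Eseq_hits n : \sum_(x < N) E M (fun s => (hits x n s)%:R) = 1.
Proof.
rewrite -Eseq_sum // -[RHS](Eseq_cst q_sum M 1).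
by apply: eq_Eseq => s; apply: sum_hits_start.
Qed.

Lemma renewal_sum_N : renewal_sum N = N%:R.
Proof.
rewrite /renewal_sum big_nat_cond (eq_bigr (fun _ => 1)) -?big_nat_cond.
  by rewrite sumr_const_nat subn1.
move=> n /andP[nN _]; rewrite -(sum_Eseq_hits n); apply: eq_bigr => x _.
by apply: eq_Eseq => s; apply: hits_after_first_hit_eq; lia.
Qed.

Lemma renewal_sum_le B : renewal_sum B <= B%:R.
Proof.
have -> : B%:R = \sum_(1 <= n < B.+1) 1 :> R by rewrite sumr_const_nat subn1.
apply: ler_sum => n _.
rewrite -(sum_Eseq_hits n); apply: ler_sum => x _.
exact/ler_Eseq/hits_after_first_hit_le.
Qed.

Lemma first_hit_prob_ge0 x k : 0 <= first_hit_prob x k.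
Proof. exact: Eseq_ge0. Qed.

Lemma le_hit_prob : N%:R <= renewal_weight * hit_prob.
Proof.
rewrite -renewal_sum_N renewal_sumE ?leqnn ?(leq_trans (leq_addr N N)) //.
rewrite hit_probE mulr_sumr; apply: ler_sum => x _; rewrite mulr_sumr.
rewrite big_nat_cond [leRHS]big_nat_cond; apply: ler_sum => k /andP[kN _].
rewrite [leRHS]mulrC; apply: ler_wpM2l; first exact: first_hit_prob_ge0.
rewrite renewal_weightE.
rewrite (@big_cat_nat _ _ _ (N.+1 - k) 0 N) //=; last by lia.
by rewrite lerDl sumr_ge0 // => j _; apply: return_prob_ge0.
Qed.

Lemma hit_prob_le : renewal_weight * hit_prob <= (N + N)%:R.
Proof.
apply: le_trans (renewal_sum_le (N + N)); rewrite renewal_sumE ?leq_addr //.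
rewrite hit_probE mulr_sumr; apply: ler_sum => x _; rewrite mulr_sumr.
rewrite big_nat_cond [leRHS]big_nat_cond; apply: ler_sum => k /andP[kN _].
rewrite [leLHS]mulrC; apply: ler_wpM2l; first exact: first_hit_prob_ge0.
rewrite renewal_weightE.
rewrite (@big_cat_nat _ _ _ N 0 ((N + N).+1 - k)) //=; last by lia.
by rewrite lerDl sumr_ge0 // => j _; apply: return_prob_ge0.
Qed.

End Renewal.

Local Open Scope classical_set_scope.

Lemma big_cons_eta (V : Type) (idx : V) (op : Monoid.law idx) (I : eqType)
    (A : Type) (F : I -> A -> V) (f : I -> A) (j : I) (a : A) (r : seq I) :
  j \notin r -> \big[op/idx]_(i <- j :: r) F i ([eta f with j |-> a] i) =
  op (F j a) (\big[op/idx]_(i <- r) F i (f i)).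
Proof.
move=> jr; rewrite big_cons /= eqxx; congr (op _ _).
by apply: eq_big_seq => i ir; rewrite ifN //; apply: contraNneq jr => <-.
Qed.

Section IntegerValuedProcess.
Variables (d : measure_display) (T : measurableType d) (R : realType).
Variables (P : probability T R) (X : nat -> T -> int).
Hypotheses (hX : int_rvs X) (hind : mutually_independent P X).

Definition Xpred_slice j (A : pred int) n := [set w | pickle (X j w) = n /\ A (X j w)].

Lemma Xpred_sliceE j A n : Xpred_slice j A n =
  if pickle_inv n is Some z then (if A z then [set w | X j w = z] else set0) else set0.
Proof.
apply/seteqP; split => w /=; last first.
  case En: pickle_inv => [z|] //; case: ifP => // Az; rewrite /Xpred_slice /= => ->.
  by split => //; have := @pickle_invK int n; rewrite En.
by rewrite /Xpred_slice /= => -[<- AX]; rewrite pickleK_inv AX.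
Qed.

Lemma measurable_Xpred_slice j A n : measurable (Xpred_slice j A n).
Proof. by rewrite Xpred_sliceE; case: pickle_inv => // z; case: ifP. Qed.

Lemma Xpred_bigcup j (A : pred int) : [set w | A (X j w)] = \bigcup_n Xpred_slice j A n.
Proof. by apply/seteqP; split => [w Aw|w [n _ [_ Aw]]] //; exists (pickle (X j w)). Qed.

Lemma measurable_Xpred j (A : pred int) : measurable [set w | A (X j w)].
Proof.
by rewrite (Xpred_bigcup j A); apply: bigcupT_measurable => n; apply: measurable_Xpred_slice.
Qed.

Lemma measure_XpredI j (A : pred int) B : measurable B ->
  P ([set w | A (X j w)] `&` B) = (\sum_(n <oo) P (Xpred_slice j A n `&` B))%E.
Proof.
move=> mB; rewrite (Xpred_bigcup j A) setI_bigcupl measure_bigcup //=.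
- by apply: eq_eseriesl => n; rewrite in_setT.
- by move=> n _; apply: measurableI => //; apply: measurable_Xpred_slice.
- by move=> n m _ _ [w [[[<- _] _] [[<- _] _]]].
Qed.

Lemma fine_measureK A : measurable A -> (fine (P A))%:E = P A.
Proof. by move=> mA; rewrite fineK // fin_num_measure. Qed.

Hypothesis hid : identically_distributed P X.

Lemma identically_distributed_pred j (A : pred int) :
  P [set w | A (X j w)] = P [set w | A (X 0 w)].
Proof.
rewrite -[[set w | A (X j w)]]setIT -[[set w | A (X 0 w)]]setIT.
rewrite !measure_XpredI //; apply: eq_eseriesr => n _.
by rewrite !setIT !Xpred_sliceE; case: pickle_inv => // z; case: ifP.
Qed.

Lemma measurable_bigcap_seq (I : seq nat) (F : nat -> set T) :
  (forall i, measurable (F i)) -> measurable (\bigcap_(i in [set` I]) F i).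
Proof. by move=> mF; apply: fin_bigcap_measurable => //; exact: finite_seq. Qed.

Lemma independent_preds_points (J K : seq nat) (A : nat -> pred int) (k : nat -> int) :
  uniq (J ++ K) ->
  P (\bigcap_(i in [set` J]) [set w | A i (X i w)] `&`
     \bigcap_(i in [set` K]) [set w | X i w = k i]) =
  ((\prod_(i <- J) fine (P [set w | A i (X i w)])) *
   \prod_(i <- K) fine (P [set w | X i w = k i]))%:E.
Proof.
elim: J K k => [|j J IH] K k /=.
  move=> uK; rewrite set_nil bigcap_set0 setTI big_nil mul1r hind // -prodEFin.
  by apply: eq_bigr => i _; rewrite fine_measureK.
rewrite mem_cat negb_or => /andP[/andP[jJ jK] uJK].
rewrite (bigcap_seq (j :: J)) [in LHS]big_cons -bigcap_seq -setIA.
set PJ := \bigcap_(i in [set` J]) _; set PK := \bigcap_(i in [set` K]) _.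
have mB : measurable (PJ `&` PK).
  by apply: measurableI; apply: measurable_bigcap_seq => i;
    [apply: measurable_Xpred | apply: hX].
pose C := \prod_(i <- J) fine (P [set w | A i (X i w)]) *
  \prod_(i <- K) fine (P [set w | X i w = k i]).
have point z : A j z -> P ([set w | X j w = z] `&` (PJ `&` PK)) =
    (C%:E * P [set w | X j w = z])%E.
  move=> Az; have uJK' : uniq (J ++ j :: K).
    by rewrite -cat1s uniq_catCA /= mem_cat negb_or jJ jK.
  have := IH (j :: K) [eta k with j |-> z] uJK'.
  rewrite (bigcap_seq (j :: K)) (big_cons_eta _ (fun i a => [set w | X i w = a])) //.
  rewrite -bigcap_seq (big_cons_eta _ (fun i a => fine (P [set w | X i w = a]))) //.
  rewrite setICA => ->; rewrite -[P [set w | X j w = z]]fine_measureK ?hX // -EFinM /=.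
  by congr (_%:E); rewrite /C; ring.
rewrite measure_XpredI //.
have slice n : P (Xpred_slice j (A j) n `&` (PJ `&` PK)) =
    (C%:E * P (Xpred_slice j (A j) n `&` setT))%E.
  rewrite setIT Xpred_sliceE; case: pickle_inv => [z|]; last by rewrite set0I measure0 mule0.
  by case: ifP => Az; [apply: point | rewrite set0I measure0 mule0].
rewrite (eq_eseriesr (fun n _ => slice n)) nneseriesZl; last by move=> *; apply: measure_ge0.
rewrite -measure_XpredI // setIT.
rewrite -[P _]fine_measureK; last exact: measurable_Xpred.
by rewrite -EFinM big_cons /C; congr (_%:E); ring.
Qed.

Variable N : nat.
Hypothesis N_gt0 : (0 < N)%N.

Definition residue i w : nat := absz (X i w %% N%:Z)%Z.

Definition residue_is (r : nat) : pred int := fun z => absz (z %% N%:Z)%Z == r.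

Definition residue_law r := fine (P [set w | residue_is r (X 0 w)]).

Definition residues m n w := [seq residue i w | i <- iota m n].

Definition residue_cylinder (I : seq nat) (rho : nat -> nat) :=
  \bigcap_(i in [set` I]) [set w | residue_is (rho i) (X i w)].

Lemma residue_lt i w : (residue i w < N)%N.
Proof. by rewrite /residue -ltz_nat gez0_abs ?modz_ge0 ?ltz_pmod //; lia. Qed.

Lemma measurable_residue_cylinder I rho : measurable (residue_cylinder I rho).
Proof. by apply: measurable_bigcap_seq => i; apply: measurable_Xpred. Qed.

Lemma measure_residue_cylinder I rho : uniq I ->
  P (residue_cylinder I rho) = (\prod_(i <- I) residue_law (rho i))%:E.
Proof.
move=> uI; have := @independent_preds_points I [::] (residue_is \o rho) (fun=> 0).
rewrite cats0 set_nil bigcap_set0 setIT big_nil mulr1 => -> //.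
by congr (_%:E); apply: eq_bigr => i _; rewrite identically_distributed_pred.
Qed.

Lemma residues_event_cons m n (g : pred (seq nat)) B :
  B `&` [set w | g (residues m n.+1 w)] = \bigcup_(r < N)
    (B `&` [set w | residue_is r (X m w)] `&` [set w | g (r :: residues m.+1 n w)]).
Proof.
apply/seteqP; split => w /=.
  move=> [Bw gw]; exists (residue m w); first exact: residue_lt.
  by split=> //; split=> //=; rewrite /residue_is.
by move=> [r _ [[Bw /eqP <-] gw]].
Qed.

Lemma measurable_residues_event n m (g : pred (seq nat)) :
  measurable [set w | g (residues m n w)].
Proof.
elim: n m g => [|n IH] m g; first by case: (g [::]); rewrite ?set_true ?set_false.
rewrite -[X in measurable X]setTI residues_event_cons bigcup_mkord.
apply: bigsetU_measurable => r _; apply: measurableI.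
  by apply: measurableI => //; apply: measurable_Xpred.
exact: (IH m.+1 (fun s => g (nat_of_ord r :: s))).
Qed.

Lemma residue_cylinder_cons m I rho r : m \notin I ->
  residue_cylinder (m :: I) [eta rho with m |-> r] =
  [set w | residue_is r (X m w)] `&` residue_cylinder I rho.
Proof.
move=> mI; rewrite /residue_cylinder !bigcap_seq.
by rewrite (big_cons_eta _ (fun i a => [set w | residue_is a (X i w)])).
Qed.

(* The cylinder on indices below [m] is what lets the induction on [n] absorb
   the first residue of the sequence. *)
Lemma measure_residue_cylinderI n m I rho (g : pred (seq nat)) :
  uniq I -> all (fun i => i < m)%N I ->
  P (residue_cylinder I rho `&` [set w | g (residues m n w)]) =
  ((\prod_(i <- I) residue_law (rho i)) *
   Eseq N residue_law n (fun s => (g s)%:R))%:E.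
Proof.
elim: n m I rho g => [|n IH] m I rho g uI I_lt_m /=.
  case: (g [::]); rewrite ?set_true ?set_false ?setIT ?mulr1; last first.
    by rewrite setI0 measure0 mulr0.
  exact: measure_residue_cylinder.
have mI : m \notin I by apply: contraT => /negPn /(allP I_lt_m); rewrite ltnn.
pose slice (r : 'I_N) := residue_cylinder I rho `&` [set w | residue_is r (X m w)]
  `&` [set w | g (nat_of_ord r :: residues m.+1 n w)].
have measure_slice r : P (slice r) = ((residue_law r * \prod_(i <- I) residue_law (rho i))
    * Eseq N residue_law n (fun s => (g (nat_of_ord r :: s))%:R))%:E.
  rewrite -(big_cons_eta _ (fun i a => residue_law a) rho (nat_of_ord r) mI).
  rewrite -(IH m.+1 _ _ (fun s => g (nat_of_ord r :: s))) /=; last first.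
  - by rewrite ltnSn; apply/allP => i /(allP I_lt_m) /ltnW.
  - by rewrite mI.
  by rewrite residue_cylinder_cons // (setIC [set w | residue_is r (X m w)]).
have measurable_slice r : measurable (slice r).
  apply: measurableI;
    last exact: (measurable_residues_event n m.+1 (fun s => g (nat_of_ord r :: s))).
  by apply: measurableI; [apply: measurable_residue_cylinder | apply: measurable_Xpred].
rewrite residues_event_cons bigcup_mkord measure_semi_additive_ord.
- rewrite (eq_bigr _ (fun r _ => measure_slice r)) sumEFin mulr_sumr; congr (_%:E).
  by apply: eq_bigr => r _; ring.
- exact: measurable_slice.
- move=> r r' _ _ [w [[[_ /eqP e] _] [[_ /eqP e'] _]]].
  by apply: ord_inj; rewrite -e -e'.
- by apply: bigsetU_measurable => r _; apply: measurable_slice.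
Qed.

Lemma measure_residues n (g : pred (seq nat)) :
  P [set w | g (residues 0 n w)] = (Eseq N residue_law n (fun s => (g s)%:R))%:E.
Proof.
have := @measure_residue_cylinderI n 0 [::] (fun=> 0%N) g isT isT.
by rewrite /residue_cylinder set_nil bigcap_set0 setTI big_nil mul1r.
Qed.

Lemma residue_law_ge0 r : 0 <= residue_law r.
Proof. exact/fine_ge0/measure_ge0. Qed.

Lemma residue_law_sum : \sum_(r < N) residue_law r = 1.
Proof.
have := measure_residues 1 xpredT; rewrite set_true probability_setT => -[->] /=.
by apply: eq_bigr => r _; rewrite mulr1.
Qed.

Lemma sumn_residues n w :
  (N%:Z %| (sumn (residues 0 n w))%:Z - partial_sum X n w)%Z.
Proof.
elim: n => [|n IH]; first by rewrite /partial_sum big_ord0 subr0 dvdz0.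
rewrite /partial_sum big_ord_recr -/(partial_sum X n w).
have -> : residues 0 n.+1 w = residues 0 n w ++ [:: residue n w].
  by rewrite /residues -addn1 iotaD map_cat.
rewrite sumn_cat /= addn0 PoszD.
have -> : (sumn (residues 0 n w))%:Z + (residue n w)%:Z - (partial_sum X n w + X n w) =
    ((sumn (residues 0 n w))%:Z - partial_sum X n w) + ((residue n w)%:Z - X n w).
  by ring.
rewrite (rpredDl _ IH) /residue gez0_abs ?modz_ge0 //; last by lia.
by rewrite {2}(divz_eq (X n w) N%:Z) opprD addrCA subrr addr0 rpredN dvdz_mull ?dvdzz.
Qed.

Lemma hits_residues x n M w : (n <= M)%N ->
  hits N x n (residues 0 M w) = (N%:Z %| x%:Z + partial_sum X n w - n%:Z)%Z.
Proof.
move=> nM; rewrite /hits /residues -map_take take_iota (minn_idPl nM) -/(residues 0 n w).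
have -> : x%:Z + (sumn (residues 0 n w))%:Z - n%:Z = (x%:Z + partial_sum X n w - n%:Z) +
    ((sumn (residues 0 n w))%:Z - partial_sum X n w) by ring.
by rewrite (rpredDr _ (sumn_residues n w)).
Qed.

Lemma hit_eventE x M : (N <= M)%N ->
  hit_event X N x = [set w | hits_by N x (residues 0 M w)].
Proof.
move=> NM; apply/seteqP; split => w /=.
  move=> [n [/andP[n1 nN]]]; rewrite -modz_nat => /eqP; rewrite eqz_mod_dvd => hn.
  apply/hasP; exists n; first by rewrite mem_iota; lia.
  by rewrite hits_residues //; lia.
case/hasP => n; rewrite mem_iota => /andP[n1 nN].
rewrite hits_residues => [hn|]; last by lia.
exists n; split; first by lia.
by rewrite -modz_nat; apply/eqP; rewrite eqz_mod_dvd.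
Qed.

Lemma p_classE i : p_class P X N i = return_prob N residue_law i.
Proof.
rewrite /p_class (_ : [set w | _] = [set w | hits N 0 i (residues 0 i w)]).
  by rewrite measure_residues.
by apply/seteqP; split => w /=; rewrite hits_residues // add0r.
Qed.

Lemma PR_hitE M : (N <= M)%N ->
  PR_hit P X N = N%:R^-1 * hit_prob N M residue_law.
Proof.
move=> NM; rewrite /PR_hit /hit_prob; congr (_ * _); apply: eq_bigr => x _.
by rewrite (hit_eventE x NM) measure_residues.
Qed.

End IntegerValuedProcess.

Local Close Scope classical_set_scope.
Unset Implicit Arguments.

Theorem corollary3 (d : measure_display) (T : measurableType d) (R : realType)
  (P : probability T R) (X : nat -> T -> int)
  (hX : int_rvs X) (hind : mutually_independent P X)
  (hid : identically_distributed P X) (N : nat) (hN : (1 < N)%N) :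
  let D := 1 + \sum_(1 <= i < N) p_class P X N i in
  D^-1 <= PR_hit P X N <= 2 / D.
Proof.
have N_gt0 : (0 < N)%N := ltnW hN.
have q_ge0 := residue_law_ge0 P X N.
have q_sum := residue_law_sum hX hind hid N_gt0.
have DE : 1 + \sum_(1 <= i < N) p_class P X N i = renewal_weight N (residue_law P X N).
  by congr (1 + _); apply: eq_bigr => i _; rewrite p_classE.
rewrite /= DE (PR_hitE hX hind hid N_gt0 (leq_addr N N)).
have lower := le_hit_prob q_ge0 q_sum N_gt0 (leqnn (N + N)).
have upper := hit_prob_le q_ge0 q_sum N_gt0 (leqnn (N + N)).
have D_gt0 := renewal_weight_gt0 N q_ge0.
have N_gt0R : 0 < N%:R :> R by rewrite ltr0n.
rewrite ler_pdivlMl // ler_pdivrMr // mulrC lower /=.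
rewrite ler_pdivrMl // mulrA ler_pdivlMr // mulrC.
by rewrite (le_trans upper) // natrD mulr_natr mulr2n.
Qed.
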